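(* There exists a $CS(3,K_4^{(3)}+e,gn+1)$ of type $(g^n:1)$ for each $(g,n)\in\{(5,3),(5,5),(6,4),(10,2)\}$.
   Context: $K_4^{(3)}+e$ denotes the 3-uniform hypergraph with vertex set $\{1,2,3,4,5\}$ and edge set $\{\{1,2,3\},\{1,2,4\},\{1,3,4\},\{2,3,4\},\{3,4,5\}\}$. A $CS(3,K_4^{(3)}+e,gn+s)$ of type $(g^n:s)$ is a quadruple $(X,S,\mathcal{T},\mathcal{A})$ where $|X|=gn+s$, $S\subseteq X$ with $|S|=s$ (the stem), $\mathcal{T}=\{G_1,\dots,G_n\}$ is a partition of $X\setminus S$ into $n$ groups of size $g$, and $\mathcal{A}$ is a collection of hypergraphs on subsets of $X$ (blocks), each isomorphic to $K_4^{(3)}+e$, such that every 3-subset $T\subseteq X$ with $|T\cap(S\cup G_i)|<3$ for all $i$ is an edge of exactly one block, and no 3-subset of any $S\cup G_i$ is an edge of any block. Here $s=1$. *)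

From mathcomp Require Import all_boot.
Set Implicit Arguments. Unset Strict Implicit. Unset Printing Implicit Defensive.

(* Vertices 1..5 of the paper are 0..4 here. *)
Definition v5 (k : nat) : 'I_5 := inord k.

Definition K4e_edges : {set {set 'I_5}} :=
  [set [set v5 0; v5 1; v5 2]; [set v5 0; v5 1; v5 3];
       [set v5 0; v5 2; v5 3]; [set v5 1; v5 2; v5 3];
       [set v5 2; v5 3; v5 4]].

Definition is_K4e_block (T : finType) (B : {set {set T}}) : Prop :=
  exists f : 'I_5 -> T, injective f /\ B = [set f @: E | E : {set 'I_5} in K4e_edges].

Definition CS_K4e (T : finType) (g n s : nat) : Prop :=
  #|T| = g * n + s /\
  exists (S : {set T}) (G : {set {set T}}) (A : seq {set {set T}}),
    [/\ #|S| = s,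
        partition G (~: S),
        #|G| = n &
        (forall Gi, Gi \in G -> #|Gi| = g)] /\
    [/\ (forall B, B \in A -> is_K4e_block B),
        (forall t : {set T}, #|t| = 3 ->
           (forall Gi, Gi \in G -> #|t :&: (S :|: Gi)| < 3) ->
           count (fun B : {set {set T}} => t \in B) A = 1) &
        (forall t : {set T}, #|t| = 3 ->
           (exists2 Gi, Gi \in G & t \subset S :|: Gi) ->
           forall B, B \in A -> t \notin B)].

From mathcomp Require Import all_boot.

(* The points are Z_(gn) together with a point oo = gn forming the stem, and the
   groups are the residue classes mod n.  Each design is the set of translates of
   a few base blocks under a subgroup of Z_(gn) fixing oo.  Both defining
   properties of a CS then reduce to one Boolean condition per triple a < b < c of
   natural numbers (the number of blocks having {a, b, c} as an edge is 0 or 1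
   according as the triple lies in the stem plus a group or not), which is
   decided by evaluation. *)

Section Triples.
Variable T : finType.

Lemma subset_set3 (a b c : T) (X : {set T}) :
  ([set a; b; c] \subset X) = [&& a \in X, b \in X & c \in X].
Proof. by rewrite !subUset !sub1set andbA. Qed.

Lemma card_set3 (a b c : T) : uniq [:: a; b; c] -> #|[set a; b; c]| = 3.
Proof.
rewrite /= !inE !negb_or andbT => /andP [/andP [ab ac] bc].
by rewrite -setUA cardsU1 cardsU1 cards1 !inE negb_or ab ac bc.
Qed.

Lemma eq_set3 (t : {set T}) (a b c : T) : #|t| = 3 -> uniq [:: a; b; c] ->
  (t == [set a; b; c]) = [&& a \in t, b \in t & c \in t].
Proof.
move=> ht abc; rewrite eq_sym eqEcard subset_set3 ht card_set3 //.
by rewrite leqnn andbT.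
Qed.

Lemma ltn_card_setI (t X : {set T}) : (#|t :&: X| < #|t|) = ~~ (t \subset X).
Proof.
rewrite (ltn_leqif (subset_leqif_cards (subsetIl t X))).
by rewrite (sameP setIidPl eqP).
Qed.

End Triples.

Lemma set3_sorted (m : nat) (t : {set 'I_m}) : #|t| = 3 ->
  exists a b c : 'I_m, [/\ a < b, b < c & t = [set a; b; c]].
Proof.
move=> ht; pose s := sort (fun x y : 'I_m => x <= y) (enum t).
have s_perm : perm_eq s (enum t) by rewrite perm_sort.
have s_sorted : sorted (fun x y : 'I_m => x <= y) s.
  by apply: sort_sorted => x y; exact: leq_total.
have s_uniq : uniq s by rewrite (perm_uniq s_perm) enum_uniq.
have s_size : size s = 3 by rewrite size_sort -cardE.
have t_s x : (x \in t) = (x \in s) by rewrite (perm_mem s_perm) mem_enum.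
move: s_sorted s_uniq s_size t_s; clear s_perm; clearbody s.
case: s => [|a [|b [|c []]]] //= /and3P [ab bc _].
rewrite !inE !negb_or andbT => /andP [/andP [nab nac] nbc] _ t_s.
exists a, b, c; split; rewrite ?ltn_neqAle ?val_eqE ?nab ?nbc //.
by apply/setP => x; rewrite t_s !inE orbA.
Qed.

Definition all_triples (P : seq nat -> bool) (m : nat) : bool :=
  all (fun c => all (fun b => all (fun a => P [:: a; b; c]) (iota 0 b)) (iota 0 c))
      (iota 0 m).

Lemma all_triplesP (P : seq nat -> bool) (m : nat) : all_triples P m ->
  forall a b c, a < b -> b < c -> c < m -> P [:: a; b; c].
Proof.
move=> H a b c ab bc cm.
move/allP/(_ c): H; rewrite mem_iota cm => /(_ isT) /allP /(_ b).
rewrite mem_iota bc => /(_ isT) /allP /(_ a).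
by rewrite mem_iota ab => /(_ isT).
Qed.

Definition K4e_edge_seq : seq (seq nat) :=
  [:: [:: 0; 1; 2]; [:: 0; 1; 3]; [:: 0; 2; 3]; [:: 1; 2; 3]; [:: 2; 3; 4]].

Lemma mem_K4e_block (T : finType) (f : 'I_5 -> T) (t : {set T}) :
  injective f -> #|t| = 3 ->
  (t \in [set f @: E | E : {set 'I_5} in K4e_edges]) =
  has (all (fun i => f (v5 i) \in t)) K4e_edge_seq.
Proof.
move=> f_inj ht.
have uniq_f (i j k : 'I_5) : uniq [:: i; j; k] -> uniq [:: f i; f j; f k].
  by move=> ijk; rewrite -[[:: f i; f j; f k]]/(map f [:: i; j; k]) map_inj_uniq.
rewrite /K4e_edges !imsetU !imset_set1 !inE !imsetU !imset_set1.
rewrite !eq_set3 ?uniq_f //= ?andbT ?orbF ?orbA //.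
all: by rewrite !inE -!val_eqE /= !inordK.
Qed.

Section Cyclic.
Variables g n : nat.
Hypotheses (g_gt0 : 0 < g) (n_gt0 : 0 < n).

Local Notation point := 'I_(g * n + 1).

Fact stem_subproof : g * n < g * n + 1. Proof. by rewrite addn1. Qed.
Definition stem : point := Ordinal stem_subproof.

Definition group (r : nat) : {set point} :=
  [set x : point | (x < g * n) && (x %% n == r)].

Definition groups : {set {set point}} := [set group r | r : 'I_n].

Lemma card_group (r : 'I_n) : #|group r| = g.
Proof.
have lt_gn (k : 'I_g) : r + k * n < g * n.
  by rewrite (leq_trans _ (leq_mul (ltn_ord k) (leqnn n))) // mulSn ltn_add2r.
pose h k := Ordinal (ltn_addr 1 (lt_gn k)).
have h_inj : injective h.
  move=> k k' /(congr1 val) /= /addnI /eqP.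
  by rewrite eqn_mul2r gtn_eqF //= => /eqP /val_inj.
suff -> : group r = h @: setT by rewrite card_imset // cardsT card_ord.
apply/setP => x; rewrite inE; apply/andP/imsetP => [[x_lt /eqP x_r] | [k _ ->]].
  have q_lt : x %/ n < g by rewrite ltn_divLR.
  exists (Ordinal q_lt) => //; apply: val_inj.
  by rewrite /= {1}(divn_eq x n) x_r addnC.
split; first exact: lt_gn.
by rewrite /= addnC modnMDl modn_small.
Qed.

Lemma group_neq0 (r : 'I_n) : group r != set0.
Proof. by rewrite -card_gt0 card_group. Qed.

Lemma group_inj : injective (fun r : 'I_n => group r).
Proof.
move=> r r' /= eq_rr'; have /set0Pn [x x_r] := group_neq0 r.
have x_r' : x \in group r' by rewrite -eq_rr'.
move: x_r x_r'; rewrite !inE => /andP [_ /eqP xr] /andP [_ /eqP xr'].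
by apply: val_inj; rewrite /= -xr -xr'.
Qed.

Lemma card_groups : #|groups| = n.
Proof. by rewrite card_imset ?card_ord //; exact: group_inj. Qed.

Lemma leq_point (x : point) : x <= g * n.
Proof. by rewrite -ltnS -[(g * n).+1]addn1. Qed.

Lemma partition_groups : partition groups (~: [set stem]).
Proof.
apply/and3P; split.
- rewrite cover_imset; apply/eqP/setP => x; rewrite !inE -val_eqE /=.
  apply/bigcupP/idP => [[r _] | x_ne]; first by rewrite inE => /andP [/ltn_eqF ->].
  exists (Ordinal (ltn_pmod x n_gt0)) => //.
  by rewrite inE eqxx andbT ltn_neqAle x_ne leq_point.
- apply/trivIsetP => _ _ /imsetP [r _ ->] /imsetP [r' _ ->] ne.
  rewrite -setI_eq0; apply/eqP/setP => x; rewrite !inE.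
  apply/negP => /andP [/andP [_ /eqP xr] /andP [_ /eqP xr']].
  by rewrite (val_inj (etrans (esym xr) xr')) eqxx in ne.
- by apply/imsetP => [[r _ /eqP]]; rewrite eq_sym (negbTE (group_neq0 r)).
Qed.

Lemma mem_stem_group (x : point) (r : nat) :
  (x \in [set stem] :|: group r) = (val x == g * n) || (val x %% n == r).
Proof. by rewrite !inE -val_eqE /= ltn_neqAle leq_point andbT; case: eqP. Qed.

Definition in_stem_group (l : seq nat) : bool :=
  has (fun r => all (fun x => (x == g * n) || (x %% n == r)) l) (iota 0 n).

Lemma in_stem_group_set3 (a b c : point) :
  in_stem_group [:: val a; val b; val c] =
  [exists Gi in groups, [set a; b; c] \subset [set stem] :|: Gi].
Proof.
apply/hasP/existsP => [[r] | [_ /andP [/imsetP [r _ ->]]]].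
  rewrite mem_iota leq0n add0n /= andbT => r_lt abc.
  by exists (group (Ordinal r_lt)); rewrite imset_f // subset_set3 !mem_stem_group.
rewrite subset_set3 !mem_stem_group => abc.
by exists (val r); rewrite ?mem_iota /= ?andbT.
Qed.

Definition block_map (s : seq nat) (i : 'I_5) : point := insubd stem (nth 0 s i).

Definition block (s : seq nat) : {set {set point}} :=
  [set block_map s @: E | E : {set 'I_5} in K4e_edges].

Definition block_seq (s : seq nat) : bool :=
  [&& size s == 5, uniq s & all (fun x => x < g * n + 1) s].

Lemma val_block_map (s : seq nat) (i : 'I_5) :
  block_seq s -> val (block_map s i) = nth 0 s i.
Proof.
case/and3P => /eqP s_size _ /allP s_lt.
by rewrite val_insubd s_lt // mem_nth // s_size.
Qed.

Lemma block_map_inj (s : seq nat) : block_seq s -> injective (block_map s).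
Proof.
move=> s_ok i j /(congr1 val); rewrite !val_block_map //.
case/and3P: s_ok => /eqP s_size s_uniq _ /eqP.
by rewrite nth_uniq ?s_size // => /eqP /val_inj.
Qed.

Definition edge_of (l s : seq nat) : bool :=
  has (all (fun i => nth 0 s i \in l)) K4e_edge_seq.

Lemma mem_block (s : seq nat) (a b c : point) :
  block_seq s -> uniq [:: a; b; c] ->
  ([set a; b; c] \in block s) = edge_of [:: val a; val b; val c] s.
Proof.
move=> s_ok abc; rewrite mem_K4e_block ?card_set3 //; last exact: block_map_inj.
by rewrite /edge_of /= !inE -!val_eqE !val_block_map // !inordK // !orbA.
Qed.

Definition design_certificate (A : seq (seq nat)) : bool :=
  all block_seq A &&
  all_triples (fun l => count (edge_of l) A == ~~ in_stem_group l) (g * n + 1).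

Lemma count_block_mem (A : seq (seq nat)) (t : {set point}) :
  design_certificate A -> #|t| = 3 ->
  count (fun B : {set {set point}} => t \in B) (map block A) =
  ~~ [exists Gi in groups, t \subset [set stem] :|: Gi].
Proof.
case/andP => A_ok /all_triplesP A_triples /set3_sorted [a [b [c [ab bc ->]]]].
have abc : uniq [:: a; b; c].
  rewrite /= !inE !negb_or -!val_eqE /=.
  by rewrite (ltn_eqF ab) (ltn_eqF bc) (ltn_eqF (ltn_trans ab bc)).
rewrite -in_stem_group_set3 -(eqP (A_triples _ _ _ ab bc (ltn_ord c))) count_map.
by apply: eq_in_count => s /(allP A_ok) s_ok /=; exact: mem_block.
Qed.

Theorem CS_K4e_of_certificate (A : seq (seq nat)) :
  design_certificate A -> CS_K4e point g n 1.
Proof.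
move=> cert; have /andP [A_ok _] := cert.
split; first by rewrite card_ord.
exists [set stem], groups, (map block A); split.
  split; [exact: cards1 | exact: partition_groups | exact: card_groups |].
  by move=> _ /imsetP [r _ ->]; exact: card_group.
split.
- move=> _ /mapP [s /(allP A_ok) s_ok ->].
  by exists (block_map s); split; [exact: block_map_inj |].
- move=> t t3 t_out; rewrite count_block_mem //.
  suff -> : [exists Gi in groups, t \subset [set stem] :|: Gi] = false by [].
  apply/existsP => [[Gi /andP [Gi_in t_sub]]].
  by move: (t_out Gi Gi_in); rewrite -t3 ltn_card_setI t_sub.
- move=> t t3 [Gi Gi_in t_sub] B B_A.
  have : ~~ has (fun B : {set {set point}} => t \in B) (map block A).
    rewrite has_count count_block_mem //.
    suff -> : [exists Gi in groups, t \subset [set stem] :|: Gi] by [].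
    by apply/existsP; exists Gi; rewrite Gi_in.
  by move/hasPn; apply.
Qed.

End Cyclic.

Definition develop (m d : nat) (base : seq (seq nat)) : seq (seq nat) :=
  [seq [seq if x == m then m else (x + k * d) %% m | x <- b]
  | k <- iota 0 (m %/ d), b <- base].

(* A base block [:: a; b; c; d; e] is the copy of K_4^(3)+e with edges abc, abd,
   acd, bcd and cde. *)
Definition base_5_3 : seq (seq nat) :=
  [:: [:: 0; 14; 4; 15; 3]; [:: 1; 15; 6; 8; 11]; [:: 1; 15; 9; 14; 7];
      [:: 2; 5; 4; 6; 15]; [:: 1; 7; 0; 11; 15]; [:: 1; 2; 7; 8; 15];
      [:: 0; 7; 10; 14; 15]; [:: 0; 4; 3; 11; 15]; [:: 0; 6; 5; 8; 1];
      [:: 0; 8; 2; 13; 14]; [:: 1; 4; 11; 14; 3]; [:: 0; 10; 8; 9; 6];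
      [:: 2; 8; 4; 10; 0]; [:: 0; 3; 8; 14; 12]; [:: 0; 10; 6; 11; 5];
      [:: 1; 4; 0; 2; 6]; [:: 0; 10; 12; 13; 2]; [:: 0; 2; 7; 12; 13];
      [:: 1; 5; 4; 12; 3]; [:: 0; 4; 6; 13; 9]].

Definition base_5_5 : seq (seq nat) :=
  [:: [:: 0; 25; 4; 6; 5]; [:: 0; 12; 4; 11; 25]; [:: 0; 25; 8; 24; 5];
      [:: 0; 12; 10; 24; 25]; [:: 0; 3; 10; 23; 25]; [:: 0; 5; 8; 11; 25];
      [:: 0; 12; 1; 7; 24]; [:: 0; 4; 1; 3; 17]; [:: 0; 4; 7; 18; 1];
      [:: 0; 7; 2; 6; 17]; [:: 0; 5; 1; 17; 15]; [:: 0; 3; 5; 13; 9];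
      [:: 0; 9; 4; 10; 22]; [:: 0; 3; 7; 16; 21]; [:: 0; 8; 12; 22; 5];
      [:: 0; 1; 6; 15; 9]; [:: 0; 6; 13; 16; 21]; [:: 0; 2; 13; 19; 23];
      [:: 0; 2; 4; 20; 19]; [:: 0; 2; 9; 17; 10]].

Definition base_6_4 : seq (seq nat) :=
  [:: [:: 0; 24; 15; 17; 18]; [:: 0; 3; 14; 24; 9]; [:: 0; 8; 21; 22; 24];
      [:: 0; 12; 3; 9; 24]; [:: 0; 2; 4; 14; 1]; [:: 0; 4; 7; 9; 23];
      [:: 0; 2; 13; 18; 10]; [:: 0; 6; 2; 20; 23]; [:: 0; 8; 11; 15; 14];
      [:: 0; 5; 15; 23; 20]; [:: 0; 2; 7; 11; 22]; [:: 0; 2; 1; 15; 18];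
      [:: 0; 11; 17; 18; 21]; [:: 0; 6; 5; 14; 20]; [:: 0; 8; 1; 13; 7];
      [:: 0; 5; 1; 12; 7]; [:: 0; 3; 17; 22; 21]; [:: 0; 10; 1; 17; 19]].

Definition base_10_2 : seq (seq nat) :=
  [:: [:: 0; 3; 6; 15; 20]; [:: 0; 3; 4; 7; 20]; [:: 0; 1; 6; 11; 20];
      [:: 0; 5; 12; 13; 20]; [:: 0; 3; 5; 18; 20]; [:: 0; 8; 3; 9; 16];
      [:: 0; 9; 4; 5; 3]; [:: 0; 9; 1; 18; 8]; [:: 0; 3; 13; 14; 7];
      [:: 0; 4; 11; 13; 10]].

Theorem lemma3p5 (g n : nat) :
  (g, n) \in [:: (5, 3); (5, 5); (6, 4); (10, 2)] ->
  CS_K4e 'I_(g * n + 1) g n 1.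
Proof.
rewrite !inE => /or4P [] /eqP [-> ->].
- by apply: (@CS_K4e_of_certificate 5 3 isT isT (develop 15 3 base_5_3)); vm_compute.
- by apply: (@CS_K4e_of_certificate 5 5 isT isT (develop 25 1 base_5_5)); vm_compute.
- by apply: (@CS_K4e_of_certificate 6 4 isT isT (develop 24 1 base_6_4)); vm_compute.
- by apply: (@CS_K4e_of_certificate 10 2 isT isT (develop 20 1 base_10_2)); vm_compute.
Qed.
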